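(* Let $E$ be a pseudo effect algebra satisfying (RDP) and let $m\in\mathcal J(E)$. Define $v_m:E\to\mathbb R$ by $$v_m(x):=\sup\{|m(x_1)|+\cdots+|m(x_n)|:\ x=x_1+\cdots+x_n,\ x_1,\dots,x_n\in E,\ n\ge1\}.$$ Then $v_m=|m|$, where $|m|:=m^++m^-$, $m^+:=m\vee0$ and $m^-:=-(m\wedge0)$ in $\mathcal J(E)$.
   Context: Pseudo effect algebra: partial algebra $(E;+,0,1)$ such that for all $a,b,c$: (i) $a+b$ and $(a+b)+c$ exist iff $b+c$ and $a+(b+c)$ exist, and then they are equal; (ii) there is exactly one $d$ and one $e$ with $a+d=e+a=1$; (iii) if $a+b$ exists there are $d,e$ with $a+b=d+a=b+e$; (iv) if $1+a$ or $a+1$ exists then $a=0$. (RDP): whenever $a_1+a_2=b_1+b_2$ there are $d_1,\dots,d_4$ with $d_1+d_2=a_1$, $d_3+d_4=a_2$, $d_1+d_3=b_1$, $d_2+d_4=b_2$. Signed measure: $m:E\to\mathbb R$ additive on defined sums; measure: nonnegative signed measure. $\mathcal J(E)$: signed measures that are differences of two measures, ordered by $m_1\le^+m_2$ iff $m_2-m_1$ is a measure; under (RDP) it is a lattice-ordered group with zero element the zero measure. *)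

From Stdlib Require Import Reals List.
Open Scope R_scope.

Definition oadd {E : Type} (add : E -> E -> option E) (x y : option E) : option E :=
  match x, y with
  | Some a, Some b => add a b
  | _, _ => None
  end.

Record PEA := {
  pea_car :> Type;
  pea_add : pea_car -> pea_car -> option pea_car;
  pea_zero : pea_car;
  pea_one : pea_car;
  (* (i): (a+b)+c defined iff a+(b+c) defined, and then equal *)
  pea_assoc : forall a b c : pea_car,
    oadd pea_add (pea_add a b) (Some c) = oadd pea_add (Some a) (pea_add b c);
  pea_compl_r : forall a, exists! d, pea_add a d = Some pea_one;
  pea_compl_l : forall a, exists! e, pea_add e a = Some pea_one;
  pea_conj : forall a b ab, pea_add a b = Some ab ->
    exists d e, pea_add d a = Some ab /\ pea_add b e = Some ab;
  pea_one_add : forall a r,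
    (pea_add pea_one a = Some r \/ pea_add a pea_one = Some r) -> a = pea_zero
}.

Arguments pea_add {p}.

Definition RDP (E : PEA) : Prop :=
  forall a1 a2 b1 b2 c : E,
    pea_add a1 a2 = Some c -> pea_add b1 b2 = Some c ->
    exists d1 d2 d3 d4 : E,
      pea_add d1 d2 = Some a1 /\ pea_add d3 d4 = Some a2 /\
      pea_add d1 d3 = Some b1 /\ pea_add d2 d4 = Some b2.

Definition signed_measure (E : PEA) (m : E -> R) : Prop :=
  forall a b c : E, pea_add a b = Some c -> m c = m a + m b.

Definition measure (E : PEA) (m : E -> R) : Prop :=
  signed_measure E m /\ forall x, 0 <= m x.

Definition inJ (E : PEA) (m : E -> R) : Prop :=
  exists m1 m2, measure E m1 /\ measure E m2 /\ forall x, m x = m1 x - m2 x.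

Definition leJ (E : PEA) (m1 m2 : E -> R) : Prop :=
  measure E (fun x => m2 x - m1 x).

Definition is_joinJ (E : PEA) (m1 m2 j : E -> R) : Prop :=
  inJ E j /\ leJ E m1 j /\ leJ E m2 j /\
  forall k, inJ E k -> leJ E m1 k -> leJ E m2 k -> leJ E j k.

Definition is_meetJ (E : PEA) (m1 m2 j : E -> R) : Prop :=
  inJ E j /\ leJ E j m1 /\ leJ E j m2 /\
  forall k, inJ E k -> leJ E k m1 -> leJ E k m2 -> leJ E k j.

Definition zero_measure (E : PEA) : E -> R := fun _ => 0.

(* x1 + (x2 + (... + xn)) for a nonempty list; None if undefined or empty *)
Fixpoint lsum {E : PEA} (xs : list E) : option E :=
  match xs with
  | nil => None
  | x :: nil => Some x
  | x :: rest => oadd pea_add (Some x) (lsum rest)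
  end.

Definition var_set (E : PEA) (m : E -> R) (x : E) : R -> Prop :=
  fun r => exists xs : list E, xs <> nil /\ lsum xs = Some x /\
    r = fold_right Rplus 0 (map (fun y => Rabs (m y)) xs).

From Stdlib Require Import Reals List Lra.
Open Scope R_scope.

(** The positive part of [m] is [m^+(x) = sup {m(y) : y + z = x}], finite
    because [m <= m1] when [m = m1 - m2].  Moving summands past each other
    with axiom (iii) makes [m^+] superadditive, and (RDP) makes it
    subadditive, so [m^+] is a measure; it is plainly the least measure above
    [m] and [0], i.e. [m \/ 0], and then [m /\ 0 = m - m^+] and
    [|m| = 2 m^+ - m].  Since [|m(a)| <= 2 m^+(a) - m(a)] for every [a], the
    additivity of [2 m^+ - m] bounds every sum [|m(x1)| + ... + |m(xn)|] by
    [|m|(x)], while the two-term sums [|m(y)| + |m(z)| >= 2 m(y) - m(x)] for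
    [y + z = x] come arbitrarily close to it. *)

Section PseudoEffectAlgebra.
Variable E : PEA.

Lemma add_one_zero : pea_add (pea_one E) (pea_zero E) = Some (pea_one E).
Proof.
  destruct (pea_compl_r E (pea_one E)) as [d [Hd _]].
  pose proof (pea_one_add E d (pea_one E) (or_introl Hd)); subst; exact Hd.
Qed.

Lemma add_zero_one : pea_add (pea_zero E) (pea_one E) = Some (pea_one E).
Proof.
  destruct (pea_compl_l E (pea_one E)) as [d [Hd _]].
  pose proof (pea_one_add E d (pea_one E) (or_intror Hd)); subst; exact Hd.
Qed.

Lemma add_zero_r (b : E) : pea_add b (pea_zero E) = Some b.
Proof.
  destruct (pea_compl_l E b) as [e [He _]].
  pose proof (pea_assoc E e b (pea_zero E)) as A.
  rewrite He in A; simpl in A; rewrite add_one_zero in A.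
  destruct (pea_add b (pea_zero E)) as [w|] eqn:Hw; simpl in A; [|discriminate].
  destruct (pea_compl_r E e) as [d [Hd Hu]].
  rewrite <- (Hu b He), <- (Hu w (eq_sym A)); reflexivity.
Qed.

Lemma add_zero_l (b : E) : pea_add (pea_zero E) b = Some b.
Proof.
  destruct (pea_compl_r E b) as [c [Hc _]].
  pose proof (pea_assoc E (pea_zero E) b c) as A.
  rewrite Hc in A; simpl in A; rewrite add_zero_one in A.
  destruct (pea_add (pea_zero E) b) as [w|] eqn:Hw; simpl in A; [|discriminate].
  destruct (pea_compl_l E c) as [d [Hd Hu]].
  rewrite <- (Hu b Hc), <- (Hu w A); reflexivity.
Qed.

Lemma add_assoc_r (a b c ab r : E) :
  pea_add a b = Some ab -> pea_add ab c = Some r ->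
  exists bc, pea_add b c = Some bc /\ pea_add a bc = Some r.
Proof.
  intros H1 H2. pose proof (pea_assoc E a b c) as A.
  rewrite H1 in A; simpl in A; rewrite H2 in A.
  destruct (pea_add b c) as [bc|]; simpl in A; [eauto|discriminate].
Qed.

Lemma add_assoc_l (a b c bc r : E) :
  pea_add b c = Some bc -> pea_add a bc = Some r ->
  exists ab, pea_add a b = Some ab /\ pea_add ab c = Some r.
Proof.
  intros H1 H2. pose proof (pea_assoc E a b c) as A.
  rewrite H1 in A; simpl in A; rewrite H2 in A.
  destruct (pea_add a b) as [ab|]; simpl in A; [eauto|discriminate].
Qed.

(* From [z = (a + a') + (b + b')], commute [b] to the left of [a'] as [d],
   with [a' + b = d + a'], so that [a + d] is an initial summand of [z]. *)
Lemma add_move_summand_left (a a' b b' x y z : E) :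
  pea_add a a' = Some x -> pea_add b b' = Some y -> pea_add x y = Some z ->
  exists d u c c', pea_add a' b = Some u /\ pea_add d a' = Some u /\
    pea_add a d = Some c /\ pea_add c c' = Some z.
Proof.
  intros Hx Hy Hz.
  destruct (add_assoc_r a a' y x z Hx Hz) as [w [Hw1 Hw2]].
  destruct (add_assoc_l a' b b' y w Hy Hw1) as [u [Hu1 Hu2]].
  destruct (pea_conj E a' b u Hu1) as [d [_ [Hd _]]].
  destruct (add_assoc_r d a' b' u w Hd Hu2) as [c' [Hc'1 Hc'2]].
  destruct (add_assoc_l a d c' w z Hc'2 Hw2) as [c [Hc1 Hc2]].
  exists d, u, c, c'; auto.
Qed.

End PseudoEffectAlgebra.

Section Measures.
Variable E : PEA.
Implicit Types f g : E -> R.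

Lemma signed_measure_ext f g :
  (forall x, f x = g x) -> signed_measure E f -> signed_measure E g.
Proof. intros Hfg Hf a b c H. rewrite <- !Hfg. exact (Hf a b c H). Qed.

Lemma measure_ext f g : (forall x, f x = g x) -> measure E f -> measure E g.
Proof.
  intros Hfg [Hf Hf0]. split; [exact (signed_measure_ext f g Hfg Hf)|].
  intro x. rewrite <- Hfg. apply Hf0.
Qed.

Lemma signed_measure_add f g :
  signed_measure E f -> signed_measure E g -> signed_measure E (fun x => f x + g x).
Proof. intros Hf Hg a b c H. rewrite (Hf a b c H), (Hg a b c H). ring. Qed.

Lemma signed_measure_sub f g :
  signed_measure E f -> signed_measure E g -> signed_measure E (fun x => f x - g x).
Proof. intros Hf Hg a b c H. rewrite (Hf a b c H), (Hg a b c H). ring. Qed.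

Lemma measure_add f g : measure E f -> measure E g -> measure E (fun x => f x + g x).
Proof.
  intros [Hf Hf0] [Hg Hg0]. split; [exact (signed_measure_add f g Hf Hg)|].
  intro x. specialize (Hf0 x). specialize (Hg0 x). lra.
Qed.

Lemma signed_measure_zero f : signed_measure E f -> f (pea_zero E) = 0.
Proof. intro Hf. pose proof (Hf _ _ _ (add_zero_r E (pea_zero E))). lra. Qed.

Lemma inJ_signed_measure f : inJ E f -> signed_measure E f.
Proof.
  intros [f1 [f2 [[H1 _] [[H2 _] Hf]]]].
  exact (signed_measure_ext _ f (fun x => eq_sym (Hf x)) (signed_measure_sub _ _ H1 H2)).
Qed.

Lemma measure_inJ f : measure E f -> inJ E f.
Proof.
  intro Hf. exists f, (zero_measure E). split; [exact Hf|split; [|intro; unfold zero_measure; ring]].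
  split; [intros a b c _; unfold zero_measure; ring | intro; apply Rle_refl].
Qed.

Lemma inJ_sub f g : inJ E f -> inJ E g -> inJ E (fun x => f x - g x).
Proof.
  intros [f1 [f2 [Hf1 [Hf2 Hf]]]] [g1 [g2 [Hg1 [Hg2 Hg]]]].
  exists (fun x => f1 x + g2 x), (fun x => f2 x + g1 x).
  split; [exact (measure_add _ _ Hf1 Hg2)|split; [exact (measure_add _ _ Hf2 Hg1)|]].
  intro x. rewrite Hf, Hg. ring.
Qed.

Lemma meetJ_of_joinJ f j :
  inJ E f -> is_joinJ E f (zero_measure E) j ->
  is_meetJ E f (zero_measure E) (fun x => f x - j x).
Proof.
  unfold is_joinJ, is_meetJ, leJ, zero_measure.
  intros Hf [Hj [Hfj [H0j Hjmin]]].
  split; [exact (inJ_sub _ _ Hf Hj)|split; [|split]].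
  - eapply measure_ext; [|exact H0j]. intro; simpl; ring.
  - eapply measure_ext; [|exact Hfj]. intro; simpl; ring.
  - intros k Hk Hkf Hk0.
    assert (Hbelow : measure E (fun x => (f x - k x) - j x)).
    { apply Hjmin; [exact (inJ_sub _ _ Hf Hk)| |].
      - eapply measure_ext; [|exact Hk0]. intro; simpl; ring.
      - eapply measure_ext; [|exact Hkf]. intro; simpl; ring. }
    eapply measure_ext; [|exact Hbelow]. intro; simpl; ring.
Qed.

End Measures.

Definition head_values (E : PEA) (m : E -> R) (x : E) : R -> Prop :=
  fun r => exists y z, pea_add y z = Some x /\ r = m y.

Lemma head_values_inhabited (E : PEA) (m : E -> R) (x : E) :
  exists r, head_values E m x r.
Proof. exists (m (pea_zero E)), (pea_zero E), x. split; [apply add_zero_l|reflexivity]. Qed.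

Lemma inJ_head_values_bound (E : PEA) (m : E -> R) :
  inJ E m -> forall x, bound (head_values E m x).
Proof.
  intros [m1 [m2 [[H1 H1pos] [[_ H2pos] Hm]]]] x.
  exists (m1 x). intros r [y [z [H ->]]].
  rewrite Hm, (H1 _ _ _ H). specialize (H1pos z). specialize (H2pos y). lra.
Qed.

Section PositivePart.
Variable E : PEA.
Variable m : E -> R.
Hypothesis Hm : signed_measure E m.
Hypothesis Hbound : forall x, bound (head_values E m x).

Definition pos_part (x : E) : R :=
  proj1_sig (completeness _ (Hbound x) (head_values_inhabited E m x)).

Lemma pos_part_lub x : is_lub (head_values E m x) (pos_part x).
Proof. unfold pos_part. destruct (completeness _ _ _) as [p Hp]. exact Hp. Qed.

Lemma head_value_le_pos_part y z x : pea_add y z = Some x -> m y <= pos_part x.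
Proof. intro H. apply (proj1 (pos_part_lub x)). exists y, z; auto. Qed.

Lemma pos_part_least x b :
  (forall y z, pea_add y z = Some x -> m y <= b) -> pos_part x <= b.
Proof.
  intro H. apply (proj2 (pos_part_lub x)).
  intros r [y [z [Hyz ->]]]. exact (H y z Hyz).
Qed.

Lemma pos_part_ge0 x : 0 <= pos_part x.
Proof.
  rewrite <- (signed_measure_zero E m Hm).
  exact (head_value_le_pos_part _ _ _ (add_zero_l E x)).
Qed.

Lemma pos_part_ge x : m x <= pos_part x.
Proof. exact (head_value_le_pos_part _ _ _ (add_zero_r E x)). Qed.

Lemma pos_part_superadditive x y z :
  pea_add x y = Some z -> pos_part x + pos_part y <= pos_part z.
Proof.
  intro Hz.
  assert (Hsum : forall a a' b b', pea_add a a' = Some x -> pea_add b b' = Some y ->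
            m a + m b <= pos_part z).
  { intros a a' b b' Hx Hy.
    destruct (add_move_summand_left E a a' b b' x y z Hx Hy Hz)
      as [d [u [c [c' [Hu1 [Hu2 [Hc Hz']]]]]]].
    assert (Hdb : m d = m b) by (pose proof (Hm _ _ _ Hu1); pose proof (Hm _ _ _ Hu2); lra).
    rewrite <- Hdb, <- (Hm _ _ _ Hc).
    exact (head_value_le_pos_part _ _ _ Hz'). }
  assert (pos_part x <= pos_part z - pos_part y); [|lra].
  apply pos_part_least. intros a a' Hx.
  assert (pos_part y <= pos_part z - m a); [|lra].
  apply pos_part_least. intros b b' Hy. pose proof (Hsum a a' b b' Hx Hy). lra.
Qed.

Hypothesis hRDP : RDP E.

Lemma pos_part_subadditive x y z :
  pea_add x y = Some z -> pos_part z <= pos_part x + pos_part y.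
Proof.
  intro Hz. apply pos_part_least. intros c c' Hc.
  destruct (hRDP c c' x y z Hc Hz) as [d1 [d2 [d3 [d4 [H12 [_ [H13 H24]]]]]]].
  rewrite (Hm _ _ _ H12).
  pose proof (head_value_le_pos_part _ _ _ H13).
  pose proof (head_value_le_pos_part _ _ _ H24).
  lra.
Qed.

Lemma pos_part_measure : measure E pos_part.
Proof.
  split; [|exact pos_part_ge0].
  intros x y z H.
  pose proof (pos_part_superadditive x y z H).
  pose proof (pos_part_subadditive x y z H).
  lra.
Qed.

Lemma pos_part_le_measure k :
  measure E k -> measure E (fun x => k x - m x) -> forall x, pos_part x <= k x.
Proof.
  intros [Hk Hk0] [_ Hkm0] x. apply pos_part_least. intros y z H.
  rewrite (Hk _ _ _ H). specialize (Hkm0 y). specialize (Hk0 z). simpl in Hkm0. lra.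
Qed.

Lemma pos_part_joinJ : is_joinJ E m (zero_measure E) pos_part.
Proof.
  unfold is_joinJ, leJ.
  split; [exact (measure_inJ E _ pos_part_measure)|split; [|split]].
  - split; [exact (signed_measure_sub E _ _ (proj1 pos_part_measure) Hm)|].
    intro x. pose proof (pos_part_ge x). lra.
  - apply (measure_ext E pos_part); [intro; unfold zero_measure; ring|exact pos_part_measure].
  - intros k Hk Hkm Hk0.
    assert (Hkmeas : measure E k).
    { eapply measure_ext; [|exact Hk0]. intro; unfold zero_measure; ring. }
    split; [exact (signed_measure_sub E _ _ (proj1 Hkmeas) (proj1 pos_part_measure))|].
    intro x. pose proof (pos_part_le_measure k Hkmeas Hkm x). lra.
Qed.

Lemma abs_le_variation a : Rabs (m a) <= 2 * pos_part a - m a.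
Proof.
  pose proof (pos_part_ge0 a). pose proof (pos_part_ge a).
  unfold Rabs; destruct (Rcase_abs (m a)); lra.
Qed.

Lemma abs_sum_le_variation xs x : lsum xs = Some x ->
  fold_right Rplus 0 (map (fun y => Rabs (m y)) xs) <= 2 * pos_part x - m x.
Proof.
  revert x. induction xs as [|a [|b rest] IH]; intros x H; [discriminate| |].
  - simpl in H. injection H as <-. simpl. pose proof (abs_le_variation a). lra.
  - change (oadd pea_add (Some a) (lsum (b :: rest)) = Some x) in H.
    destruct (lsum (b :: rest)) as [r|]; simpl in H; [|discriminate].
    specialize (IH r eq_refl). simpl in IH |- *.
    rewrite (proj1 pos_part_measure _ _ _ H), (Hm _ _ _ H).
    pose proof (abs_le_variation a). lra.
Qed.

Lemma variation_lub x : is_lub (var_set E m x) (2 * pos_part x - m x).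
Proof.
  split.
  - intros r [xs [_ [Hs ->]]]. exact (abs_sum_le_variation xs x Hs).
  - intros b Hb.
    assert (pos_part x <= (b + m x) / 2); [|lra].
    apply pos_part_least. intros y z H.
    assert (Hyz : var_set E m x (Rabs (m y) + (Rabs (m z) + 0))).
    { exists (y :: z :: nil). split; [discriminate|split; [exact H|reflexivity]]. }
    specialize (Hb _ Hyz). rewrite (Hm _ _ _ H).
    revert Hb; unfold Rabs; destruct (Rcase_abs (m y)), (Rcase_abs (m z)); intros; lra.
Qed.

End PositivePart.

Theorem proposition4p5 (E : PEA) (hRDP : RDP E) (m : E -> R) (hm : inJ E m) :
  exists mp mm : E -> R,
    is_joinJ E m (zero_measure E) mp /\
    is_meetJ E m (zero_measure E) mm /\
    forall x : E, is_lub (var_set E m x) (mp x + - mm x).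
Proof.
  pose proof (inJ_signed_measure E m hm) as Hm.
  set (p := pos_part E m (inJ_head_values_bound E m hm)).
  assert (Hjoin : is_joinJ E m (zero_measure E) p) by exact (pos_part_joinJ E m Hm _ hRDP).
  exists p, (fun x => m x - p x).
  split; [exact Hjoin|split; [exact (meetJ_of_joinJ E m p hm Hjoin)|]].
  intro x. replace (p x + - (m x - p x)) with (2 * p x - m x) by ring.
  exact (variation_lub E m Hm _ hRDP x).
Qed.
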